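(* Let $a,b,l$ be positive integers, $\alpha\in(0,1)$, $\delta\ge0$, $\epsilon\ge0$, and $G:\mathbb{R}^k\to\mathbb{R}^n$. If $A\in\mathbb{R}^{m\times n}$ satisfies S-REC$(S_{(a+b)l/2,G'},\,1-\alpha,\,\delta)$ and RIP$(bl,\alpha)$, then for every $\eta\in T_A(\epsilon)$, $$\|\eta\|_2\le(bl)^{-1/2}(C_0+1)\,\sigma_{al,G'}(\eta)+C_1\epsilon+\delta',$$ where $C_0=(1-\alpha)^{-1}(1+\alpha)$, $C_1=(1-\alpha)^{-1}$, $\delta'=\delta(1-\alpha)^{-1}$.
   Context: For $v\in\mathbb{R}^n$ and $s\ge0$, $S_s(v)=\{x\in\mathbb{R}^n:\|x-v\|_0\le s\}$ ($\|\cdot\|_0$ counts nonzero coordinates), and $S_s=S_s(0)$. The difference function is $G'(z_1,z_2)=G(z_1)-G(z_2)$, and $S_{s,G'}=\{G(z_1)-G(z_2)+\nu: z_1,z_2\in\mathbb{R}^k,\ \nu\in S_s\}$; $\sigma_{s,G'}(x)=\inf_{\hat x\in S_{s,G'}}\|x-\hat x\|_1$. $T_A(\epsilon)=\{w\in\mathbb{R}^n:\|Aw\|_2\le\epsilon\}$. A matrix $A$ satisfies RIP$(s,\alpha)$ if $(1-\alpha)\|x\|_2\le\|Ax\|_2\le(1+\alpha)\|x\|_2$ for all $x\in S_s$. For $S\subseteq\mathbb{R}^n$, $\gamma>0$, $\delta\ge0$, $A$ satisfies S-REC$(S,\gamma,\delta)$ if $\|A(x_1-x_2)\|_2\ge\gamma\|x_1-x_2\|_2-\delta$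 for all $x_1,x_2\in S$. *)

From Stdlib Require Import Reals Lra.
From mathcomp Require Import ssreflect ssrbool eqtype ssrnat seq fintype.
Set Implicit Arguments.
Unset Strict Implicit.
Open Scope R_scope.

Definition vec (n : nat) := 'I_n -> R.
Definition mat (m n : nat) := 'I_m -> 'I_n -> R.

Definition rsum (n : nat) (f : 'I_n -> R) : R :=
  foldr Rplus 0 [seq f i | i <- enum 'I_n].

Definition vzero (n : nat) : vec n := fun _ => 0.
Definition vadd (n : nat) (x y : vec n) : vec n := fun i => x i + y i.
Definition vsub (n : nat) (x y : vec n) : vec n := fun i => x i - y i.
Definition mulmv (m n : nat) (A : mat m n) (x : vec n) : vec m :=
  fun i => rsum (fun j => A i j * x j).

Definition norm0 (n : nat) (x : vec n) : nat :=
  size [seq i <- enum 'I_n | if Req_EM_T (x i) 0 then false else true].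
Definition norm1 (n : nat) (x : vec n) : R := rsum (fun i => Rabs (x i)).
Definition norm2 (n : nat) (x : vec n) : R := sqrt (rsum (fun i => x i ^ 2)).

Definition S_sparse (n : nat) (s : R) (v : vec n) : vec n -> Prop :=
  fun x => INR (norm0 (vsub x v)) <= s.

Definition S_G' (k n : nat) (s : R) (G : vec k -> vec n) : vec n -> Prop :=
  fun x => exists (z1 z2 : vec k) (nu : vec n),
      S_sparse s (@vzero n) nu /\ x = vadd (vsub (G z1) (G z2)) nu.

Definition T_A (m n : nat) (A : mat m n) (eps : R) : vec n -> Prop :=
  fun w => norm2 (mulmv A w) <= eps.

Definition RIP (m n : nat) (A : mat m n) (s alpha : R) : Prop :=
  forall x : vec n, S_sparse s (@vzero n) x ->
    (1 - alpha) * norm2 x <= norm2 (mulmv A x) <= (1 + alpha) * norm2 x.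

Definition SREC (m n : nat) (A : mat m n) (S : vec n -> Prop) (gamma delta : R)
  : Prop :=
  forall x1 x2 : vec n, S x1 -> S x2 ->
    norm2 (mulmv A (vsub x1 x2)) >= gamma * norm2 (vsub x1 x2) - delta.

(* sigma_{s,G'}(x) = inf_{xh in S_{s,G'}} ||x - xh||_1  (s a natural number) *)
Lemma rsum_nonneg (n : nat) (f : 'I_n -> R) :
  (forall i, 0 <= f i) -> 0 <= rsum f.
Proof.
move=> H; rewrite /rsum; elim: (enum 'I_n) => [|i0 l0 IH] /=; first lra.
have := H i0; lra.
Qed.

Lemma norm1_nonneg (n : nat) (x : vec n) : 0 <= norm1 x.
Proof. apply: rsum_nonneg => i; exact: Rabs_pos. Qed.

Definition sigma_set (k n s : nat) (G : vec k -> vec n) (x : vec n) : R -> Prop :=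
  fun y => exists xh, S_G' (INR s) G xh /\ y = - norm1 (vsub x xh).

Lemma sigma_set_bound k n s G x : bound (@sigma_set k n s G x).
Proof.
exists 0 => y [xh [_ ->]]; have := norm1_nonneg (vsub x xh); lra.
Qed.

Lemma sigma_set_ne k n s G x : exists y, @sigma_set k n s G x y.
Proof.
set z := @vzero k.
exists (- norm1 (vsub x (vadd (vsub (G z) (G z)) (@vzero n)))).
exists (vadd (vsub (G z) (G z)) (@vzero n)); split => //.
exists z, z, (@vzero n); split => //.
rewrite /S_sparse /norm0.
have -> : size [seq i <- enum 'I_n | if Req_EM_T (vsub (@vzero n) (@vzero n) i) 0
                                then false else true] = 0%nat.
  apply/eqP; rewrite size_filter -leqn0 leqNgt -has_count; apply/negP => /hasP [i _].
  rewrite /vsub /vzero Rminus_0_r.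
  by case: (Req_EM_T 0 0).
by apply: pos_INR.
Qed.

Definition sigma_G' (k n s : nat) (G : vec k -> vec n) (x : vec n) : R :=
  - proj1_sig (completeness _ (sigma_set_bound s G x) (sigma_set_ne s G x)).

(* Write eta = xh + h with xh in S_{al,G'}, keep the bl - 1 largest entries of h and
   call the rest r.  Shelling -- cutting r into blocks of bl entries of decreasing
   magnitude, each block having l2-norm at most the l1-norm of the previous block over
   sqrt(bl) -- bounds ||r||_2 by ||h||_1 / sqrt(bl) and, applying RIP blockwise,
   ||A r||_2 by (1 + alpha) ||h||_1 / sqrt(bl).  The remainder
   eta - r = G(z1) - G(z2) + nu + (kept entries) has fewer than (a+b)l extra nonzero
   entries, so it is a difference of two points of S_{(a+b)l/2,G'}, and S-REC bounds
   (1 - alpha) ||eta - r||_2 - delta by ||A (eta - r)||_2 <= eps + ||A r||_2.  Taking the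
   infimum over xh turns ||h||_1 into sigma_{al,G'}(eta). *)

From Stdlib Require Import Reals Lra Lia FunctionalExtensionality.
From mathcomp Require Import ssreflect ssrbool eqtype ssrnat seq fintype div zify.
Set Implicit Arguments.
Unset Strict Implicit.
Open Scope R_scope.

Definition lsum (T : Type) (s : seq T) (f : T -> R) : R := foldr Rplus 0 (map f s).

Definition nonzero (T : Type) (f : T -> R) : pred T :=
  fun i => if Req_EM_T (f i) 0 then false else true.

Lemma nonzeroP (T : Type) (f : T -> R) i : reflect (f i <> 0) (nonzero f i).
Proof. by rewrite /nonzero; case: Req_EM_T => fi; constructor. Qed.

Lemma nonzeroF (T : Type) (f : T -> R) i : nonzero f i = false -> f i = 0.
Proof. by rewrite /nonzero; case: Req_EM_T. Qed.

Section ListSums.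
Variable T : Type.

Lemma lsum_nil (f : T -> R) : lsum [::] f = 0.
Proof. by []. Qed.

Lemma lsum_cons (x : T) s f : lsum (x :: s) f = f x + lsum s f.
Proof. by []. Qed.

Lemma eq_lsum (s : seq T) f g : (forall i, f i = g i) -> lsum s f = lsum s g.
Proof. by move=> fg; rewrite /lsum (eq_map fg). Qed.

Lemma lsumD (s : seq T) f g : lsum s (fun i => f i + g i) = lsum s f + lsum s g.
Proof. elim: s => [|x s IH]; rewrite ?lsum_nil ?lsum_cons; lra. Qed.

Lemma lsumZ (s : seq T) c f : lsum s (fun i => c * f i) = c * lsum s f.
Proof. elim: s => [|x s IH]; rewrite ?lsum_nil ?lsum_cons; lra. Qed.

Lemma ler_lsum (s : seq T) f g : (forall i, f i <= g i) -> lsum s f <= lsum s g.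
Proof.
move=> fg; elim: s => [|x s IH]; rewrite ?lsum_nil ?lsum_cons; last have := fg x; lra.
Qed.

Lemma lsum_ge0 (s : seq T) f : (forall i, 0 <= f i) -> 0 <= lsum s f.
Proof.
move=> f0; elim: s => [|x s IH]; rewrite ?lsum_nil ?lsum_cons; last have := f0 x; lra.
Qed.

Lemma lsum_if_const (s : seq T) (P : pred T) c :
  lsum s (fun i => if P i then c else 0) = c * INR (count P s).
Proof.
elim: s => [|x s IH]; rewrite ?lsum_nil ?lsum_cons /=; first lra.
by case: (P x); rewrite ?plus_INR /=; lra.
Qed.

Lemma lsum_abs_le_count (s : seq T) f c : 0 <= c -> (forall i, Rabs (f i) <= c) ->
  lsum s (fun i => Rabs (f i)) <= c * INR (count (nonzero f) s).
Proof.
move=> c0 fc; elim: s => [|x s IH]; rewrite ?lsum_nil ?lsum_cons /=; first lra.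
case nzx: (nonzero f x).
- by rewrite plus_INR /=; have := fc x; lra.
- by rewrite (nonzeroF nzx) Rabs_R0 add0n; lra.
Qed.

Lemma lsum_sqr_le_sqr (s : seq T) f : (forall i, 0 <= f i) ->
  lsum s (fun i => f i ^ 2) <= lsum s f ^ 2.
Proof.
move=> f0; elim: s => [|x s IH]; rewrite ?lsum_nil ?lsum_cons; first lra.
have := lsum_ge0 s f0; have := f0 x; nra.
Qed.

Lemma lsum_sqr_le_max (s : seq T) f c : (forall i, Rabs (f i) <= c) ->
  lsum s (fun i => f i ^ 2) <= c * lsum s (fun i => Rabs (f i)).
Proof.
move=> fc; rewrite -lsumZ; apply: ler_lsum => i.
rewrite -pow2_abs; have := fc i; have := Rabs_pos (f i); nra.
Qed.

Lemma lsum_Cauchy_Schwarz (s : seq T) f g :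
  lsum s (fun i => f i * g i) ^ 2 <=
  lsum s (fun i => f i ^ 2) * lsum s (fun i => g i ^ 2).
Proof.
elim: s => [|x s]; rewrite ?lsum_nil ?lsum_cons; first lra.
set a := lsum s (fun i => f i ^ 2); set b := lsum s (fun i => g i ^ 2).
set p := lsum s (fun i => f i * g i) => IH.
have a0 : 0 <= a by apply: lsum_ge0 => i; apply: pow2_ge_0.
have b0 : 0 <= b by apply: lsum_ge0 => i; apply: pow2_ge_0.
(* a (a Y^2 + b X^2 - 2 p X Y) = (a Y - p X)^2 + (a b - p^2) X^2 with X = f x, Y = g x *)
have cross : 2 * p * (f x * g x) <= a * g x ^ 2 + b * f x ^ 2.
  case: (Rle_lt_or_eq_dec 0 a a0) => [a_pos|a_eq0].
  - apply: (Rmult_le_reg_l a) => //.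
    have := pow2_ge_0 (a * g x - p * f x).
    have : 0 <= (a * b - p ^ 2) * f x ^ 2 by apply: Rmult_le_pos; [lra|apply: pow2_ge_0].
    move=> *; nra.
  - have p0 : p = 0 by rewrite -a_eq0 in IH; nra.
    rewrite p0 -a_eq0; have := pow2_ge_0 (f x); nra.
nra.
Qed.

Lemma lsum_Minkowski (s : seq T) f g :
  sqrt (lsum s (fun i => (f i + g i) ^ 2)) <=
  sqrt (lsum s (fun i => f i ^ 2)) + sqrt (lsum s (fun i => g i ^ 2)).
Proof.
set a := lsum s (fun i => f i ^ 2); set b := lsum s (fun i => g i ^ 2).
have a0 : 0 <= a by apply: lsum_ge0 => i; apply: pow2_ge_0.
have b0 : 0 <= b by apply: lsum_ge0 => i; apply: pow2_ge_0.
have -> : lsum s (fun i => (f i + g i) ^ 2) = a + 2 * lsum s (fun i => f i * g i) + b.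
  by rewrite -lsumZ -!lsumD; apply: eq_lsum => i; ring.
set p := lsum s (fun i => f i * g i).
have p_le : p <= sqrt a * sqrt b.
  rewrite -sqrt_mult //; apply: Rle_trans (Rle_abs p) _.
  rewrite -(sqrt_pow2 _ (Rabs_pos p)) pow2_abs.
  exact/sqrt_le_1_alt/lsum_Cauchy_Schwarz.
rewrite -(sqrt_pow2 (sqrt a + sqrt b)); last by have := sqrt_pos a; have := sqrt_pos b; lra.
apply: sqrt_le_1_alt.
have := pow2_sqrt a a0; have := pow2_sqrt b b0; move=> *; nra.
Qed.

End ListSums.

Lemma lsum_ge_term (T : eqType) (s : seq T) f x : x \in s -> (forall i, 0 <= f i) ->
  f x <= lsum s f.
Proof.
move=> + f0; elim: s => [|y s IH] //; rewrite inE lsum_cons => /orP [/eqP ->|xs].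
- by have := lsum_ge0 s f0; lra.
- by have := IH xs; have := f0 y; lra.
Qed.

Lemma exists_argmax (T : eqType) (s : seq T) (f : T -> R) : s <> [::] ->
  exists2 x, x \in s & forall y, y \in s -> f y <= f x.
Proof.
elim: s => [|x s IH] // _; case: (eqVneq s [::]) => [->|/eqP /IH [w ws wmax]].
  by exists x => [|y]; rewrite ?inE // => /eqP ->; lra.
case: (Rle_lt_dec (f w) (f x)) => [wx|xw].
- exists x => [|y]; rewrite ?inE ?eqxx // => /orP [/eqP ->|ys]; first lra.
  by have := wmax y ys; lra.
- exists w => [|y]; rewrite ?inE ?ws ?orbT // => /orP [/eqP ->|ys]; first lra.
  exact: wmax.
Qed.

Lemma count_predU1 (T : eqType) (a : pred T) x s : uniq s -> x \in s -> ~~ a x ->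
  count (predU a (pred1 x)) s = (count a s).+1.
Proof.
move=> us xs nax; have := count_predUI a (pred1 x) s.
have ax0 : forall y, predI a (pred1 x) y = pred0 y.
  by move=> y /=; case: eqP => [->|_]; rewrite ?andbT ?andbF ?(negbTE nax).
by rewrite (eq_count ax0) count_pred0 (count_uniq_mem x us) xs addn0 addn1.
Qed.

Lemma count_predI_split (T : Type) (P a : pred T) s :
  count a s = (count (predI P a) s + count (predI (predC P) a) s)%N.
Proof.
have disj : forall x, predI (predI P a) (predI (predC P) a) x = pred0 x.
  by move=> x /=; case: (P x); rewrite ?andbF.
rewrite -count_predUI (eq_count disj) count_pred0 addn0; apply: eq_count => x /=.
by case: (P x); rewrite /= ?orbF.
Qed.

Lemma exists_subpred_count (T : eqType) (a : pred T) s k : uniq s -> (k <= count a s)%N ->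
  exists P : pred T, count (predI P a) s = k.
Proof.
move=> us; elim: k => [|k IH] le_ka; first by exists pred0; rewrite -(count_pred0 s).
have [P cP] := IH (ltnW le_ka).
have /hasP [x xs /andP [/= nPx ax]] : has (predI (predC P) a) s.
  by rewrite has_count; have := count_predI_split P a s; rewrite cP; lia.
exists (predU P (pred1 x)); rewrite -cP -(count_predU1 us xs) => [|/=]; last first.
  by rewrite /= negb_and nPx.
by apply: eq_count => y /=; case: eqP => [->|_]; rewrite ?ax ?andbT ?orbT ?orbF.
Qed.

Section Vectors.
Variable n : nat.
Local Notation I := (enum 'I_n).

Lemma rsumE (f : 'I_n -> R) : rsum f = lsum I f.
Proof. by []. Qed.

Lemma norm0E (x : vec n) : norm0 x = count (nonzero x) I.
Proof. by rewrite /norm0 size_filter. Qed.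

Lemma norm0_le_dim (x : vec n) : (norm0 x <= n)%N.
Proof. by rewrite norm0E -[X in (_ <= X)%N](size_enum_ord n) count_size. Qed.

Lemma norm0_vadd (x y : vec n) : (norm0 (vadd x y) <= norm0 x + norm0 y)%N.
Proof.
rewrite !norm0E -count_predUI; apply: leq_trans (leq_addr _ _); apply: sub_count => i /=.
move/nonzeroP => nz; case xi: (nonzero x i) => //=.
by apply/nonzeroP => yi; apply: nz; rewrite /vadd (nonzeroF xi) yi Rplus_0_r.
Qed.

Lemma norm0_opp (x : vec n) : norm0 (fun i => - x i) = norm0 x.
Proof.
rewrite !norm0E; apply: eq_count => i; rewrite /nonzero.
by case: (Req_EM_T (- x i) 0); case: (Req_EM_T (x i) 0) => // xi nxi; lra.
Qed.

Lemma vsubv0 (x : vec n) : vsub x (@vzero n) = x.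
Proof. by apply: functional_extensionality => i; rewrite /vsub /vzero Rminus_0_r. Qed.

Lemma abs_le_norm1 (x : vec n) i : Rabs (x i) <= norm1 x.
Proof.
by apply: (@lsum_ge_term _ I (fun j => Rabs (x j))); [rewrite mem_enum|move=> j; apply: Rabs_pos].
Qed.

Lemma norm2_vadd (x y : vec n) : norm2 (vadd x y) <= norm2 x + norm2 y.
Proof. exact: lsum_Minkowski. Qed.

Lemma norm2_vsub (x y : vec n) : norm2 (vsub x y) <= norm2 x + norm2 y.
Proof.
have -> : norm2 y = norm2 (fun i => - y i).
  by rewrite /norm2 !rsumE (@eq_lsum _ _ (fun i => y i ^ 2) (fun i => (- y i) ^ 2)) // => i; ring.
exact: lsum_Minkowski.
Qed.

Lemma mulmv_vadd m (A : mat m n) x y : mulmv A (vadd x y) = vadd (mulmv A x) (mulmv A y).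
Proof.
apply: functional_extensionality => i; rewrite /mulmv /vadd !rsumE -lsumD.
by apply: eq_lsum => j; ring.
Qed.

Lemma mulmv_vsub m (A : mat m n) x y : mulmv A (vsub x y) = vsub (mulmv A x) (mulmv A y).
Proof.
apply: functional_extensionality => i; rewrite /mulmv /vsub !rsumE.
have -> : forall u v, u - v = u + -1 * v by move=> u v; ring.
by rewrite -lsumZ -lsumD; apply: eq_lsum => j; ring.
Qed.

Definition restr (P : pred 'I_n) (h : vec n) : vec n := fun i => if P i then h i else 0.

Lemma restr_vadd (P : pred 'I_n) h : vadd (restr P h) (restr (predC P) h) = h.
Proof.
by apply: functional_extensionality => i; rewrite /vadd /restr /=; case: (P i) => /=; ring.
Qed.

Lemma norm1_restr (P : pred 'I_n) h : norm1 h = norm1 (restr P h) + norm1 (restr (predC P) h).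
Proof.
rewrite /norm1 !rsumE -lsumD; apply: eq_lsum => i; rewrite /restr /=.
by case: (P i); rewrite /= Rabs_R0; ring.
Qed.

Lemma norm0_restr (P : pred 'I_n) h : norm0 (restr P h) = count (predI P (nonzero h)) I.
Proof.
rewrite norm0E; apply: eq_count => i; rewrite /restr /nonzero /=.
by case: (P i) => //=; case: Req_EM_T.
Qed.

Lemma norm0_restr_le (P : pred 'I_n) h : (norm0 (restr P h) <= count P I)%N.
Proof. by rewrite norm0_restr; apply: sub_count => i /andP []. Qed.

Lemma norm0_restr_split (P : pred 'I_n) h :
  norm0 h = (norm0 (restr P h) + norm0 (restr (predC P) h))%N.
Proof.
by rewrite !norm0_restr norm0E (count_predI_split P).
Qed.

Lemma exists_top_coords (h : vec n) K : (K <= n)%N ->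
  exists (S : pred 'I_n) (c : R), count S I = K /\ 0 <= c /\
    (forall i, ~~ S i -> Rabs (h i) <= c) /\ (forall j, S j -> c <= Rabs (h j)).
Proof.
elim: K => [|K IH] leKn.
  exists pred0, (norm1 h); rewrite count_pred0.
  by do !split => //; [apply: norm1_nonneg|move=> i _; apply: abs_le_norm1].
have [S [c [cS [c0 [outS inS]]]]] := IH (ltnW leKn).
have /eqP compl_ne : filter (predC S) I != [::].
  have : (0 < count (predC S) I)%N by have := count_predC S I; rewrite size_enum_ord cS; lia.
  by rewrite -has_filter has_count.
have [i0] := exists_argmax (fun i => Rabs (h i)) compl_ne.
rewrite mem_filter /= => /andP [nSi0 _] i0max.
exists (predU S (pred1 i0)), (Rabs (h i0)); do !split.
- by rewrite count_predU1 ?enum_uniq ?mem_enum ?cS.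
- exact: Rabs_pos.
- move=> i; rewrite /= negb_or => /andP [nSi _].
  by apply: i0max; rewrite mem_filter /= nSi mem_enum.
- move=> j /orP [Sj|/eqP ->]; last lra.
  by have := outS i0 nSi0; have := inS j Sj; lra.
Qed.

Lemma exists_tail_threshold (h : vec n) K : exists (S : pred 'I_n) (c : R),
  (count S I <= K)%N /\ 0 <= c /\ (forall i, ~~ S i -> Rabs (h i) <= c) /\
  INR K * c <= norm1 (restr S h).
Proof.
case: (leqP K n) => [leKn|ltnK].
- have [S [c [cS [c0 [outS inS]]]]] := exists_top_coords h leKn.
  exists S, c; do !split => //; first by rewrite cS.
  rewrite -cS Rmult_comm -lsum_if_const /norm1 rsumE; apply: ler_lsum => i.
  by rewrite /restr; case: ifP => [/inS //|_]; rewrite Rabs_R0; lra.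
- exists predT, 0; rewrite count_predT size_enum_ord; do !split => //; first lia.
  + lra.
  + by rewrite Rmult_0_r; apply: norm1_nonneg.
Qed.

Lemma norm0_restr_compl (h : vec n) (S : pred 'I_n) c : (count S I < norm0 h)%N ->
  (forall i, ~~ S i -> Rabs (h i) <= c) -> (forall j, S j -> c <= Rabs (h j)) ->
  (norm0 (restr (predC S) h) + count S I)%N = norm0 h.
Proof.
move=> ltSh outS inS.
have S_nonzero : forall j, S j -> nonzero h j.
  move=> j Sj; case hj: (nonzero h j) => //; move: ltSh; rewrite ltnNge => /negP; case.
  rewrite norm0E; apply: sub_count => i /nonzeroP hi; apply/negPn/negP => nSi.
  have := outS i nSi; have := inS j Sj; have := Rabs_pos_lt _ hi.
  by rewrite (nonzeroF hj) Rabs_R0; lra.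
rewrite (norm0_restr_split S h) addnC (norm0_restr S h); congr addn.
by apply: eq_count => j /=; case Sj: (S j) => /=; rewrite ?S_nonzero.
Qed.

End Vectors.

Section Shelling.
Variables (n B : nat).
Hypothesis B_gt0 : (0 < B)%N.
Local Notation I := (enum 'I_n).
Local Notation t := (sqrt (INR B)).

Lemma sqrt_INR_ge1 : 1 <= t.
Proof. by rewrite -sqrt_1; apply/sqrt_le_1_alt/(le_INR 1)/leP. Qed.

Lemma sqrt_INR_sqr : t ^ 2 = INR B.
Proof. exact/pow2_sqrt/pos_INR. Qed.

Lemma norm2_sparse_le (y : vec n) c : 0 <= c -> (norm0 y <= B)%N ->
  (forall i, Rabs (y i) <= c) -> norm2 y <= (t - / t) * c + norm1 y / t.
Proof.
move=> c0 yB yc; have t1 := sqrt_INR_ge1.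
have tinv_le1 : / t <= 1 by rewrite -Rinv_1; apply: Rinv_le_contravar; lra.
have tinv_pos : 0 < / t by apply: Rinv_0_lt_compat; lra.
set s := norm1 y; set q := rsum (fun i => y i ^ 2).
have s0 : 0 <= s by apply: norm1_nonneg.
have q_le_cs : q <= c * s by apply: lsum_sqr_le_max.
have q_le_ss : q <= s ^ 2.
  rewrite /q rsumE (@eq_lsum _ _ _ (fun i => Rabs (y i) ^ 2)) => [|i]; last by rewrite pow2_abs.
  by apply: lsum_sqr_le_sqr => i; apply: Rabs_pos.
have s_le_cB : s <= c * INR B.
  apply: Rle_trans (lsum_abs_le_count I c0 yc) _.
  by rewrite -norm0E; apply/Rmult_le_compat_l/le_INR/leP.
rewrite /norm2 -/q /Rdiv.
case: (Rle_lt_dec s c) => [s_le_c|c_lt_s].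
- apply: Rle_trans (sqrt_le_1_alt _ _ q_le_ss) _; rewrite sqrt_pow2 //.
  have := Rmult_le_compat_r (1 - / t) _ _ ltac:(lra) s_le_c.
  have : c * 1 <= c * t by apply: Rmult_le_compat_l.
  lra.
- have q_le_ct : q <= (c * t) ^ 2.
    by rewrite Rpow_mult_distr sqrt_INR_sqr; nra.
  apply: Rle_trans (sqrt_le_1_alt _ _ q_le_ct) _; rewrite sqrt_pow2; last nra.
  nra.
Qed.

Lemma norm2_head_le (w : vec n) (S : pred 'I_n) c c' : count S I = B -> 0 <= c' ->
  (forall i, ~~ S i -> w i = 0) -> (forall j, S j -> c' <= Rabs (w j) <= c) ->
  norm2 w + (t - / t) * c' <= (t - / t) * c + norm1 w / t.
Proof.
move=> cS c'0 w_out w_in; have t1 := sqrt_INR_ge1.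
have /hasP [j _ Sj] : has S I by rewrite has_count cS.
have c'_le_c : c' <= c by have := w_in j Sj; lra.
set y := restr S (fun i => Rabs (w i) - c'); set e := restr S (fun _ => c').
have abs_w : (fun i => Rabs (w i)) = vadd y e.
  apply: functional_extensionality => i; rewrite /vadd /y /e /restr.
  by case: ifP => [_|/negbT /w_out ->]; rewrite ?Rabs_R0; ring.
have norm2_w : norm2 w = norm2 (fun i => Rabs (w i)).
  by rewrite /norm2 !rsumE; congr sqrt; apply: eq_lsum => i; rewrite pow2_abs.
have norm2_e : norm2 e = c' * t.
  rewrite /norm2 rsumE (@eq_lsum _ _ _ (fun i => if S i then c' ^ 2 else 0)) => [|i]; last first.
    by rewrite /e /restr; case: ifP => _; ring.
  rewrite lsum_if_const cS sqrt_mult ?sqrt_pow2 //; [exact: pow2_ge_0|exact: pos_INR].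
have norm1_y : norm1 y = norm1 w - c' * INR B.
  rewrite /norm1 !rsumE -cS -lsum_if_const.
  have -> : forall a b, a - b = a + -1 * b by move=> a b; ring.
  rewrite -lsumZ -lsumD; apply: eq_lsum => i; rewrite /y /restr.
  case: ifP => [/w_in ?|/negbT /w_out ->]; last by rewrite Rabs_R0; ring.
  by rewrite Rabs_pos_eq; lra.
have y_le : norm2 y <= (t - / t) * (c - c') + norm1 y / t.
  apply: norm2_sparse_le; first lra.
  - by rewrite -cS; apply: norm0_restr_le.
  - move=> i; rewrite /y /restr; case: ifP => [/w_in wi|_]; last by rewrite Rabs_R0; lra.
    by rewrite Rabs_pos_eq; lra.
have := norm2_vadd y e; rewrite -abs_w -norm2_w norm2_e.
have : norm1 y / t = norm1 w / t - c' * t.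
  by rewrite norm1_y -{1}sqrt_INR_sqr; field; lra.
lra.
Qed.

Definition subadditive (f : vec n -> R) : Prop :=
  forall x y, f (vadd x y) <= f x + f y.

Definition sparse_dominated (f : vec n -> R) (K : R) : Prop :=
  forall w, (norm0 w <= B)%N -> f w <= K * norm2 w.

(* Peel off the B largest entries of h and recurse on the rest, whose entries are
   bounded by the smallest peeled one. *)
Lemma shelling_le (f : vec n -> R) K (h : vec n) c : 0 <= K -> subadditive f ->
  sparse_dominated f K -> 0 <= c -> (forall i, Rabs (h i) <= c) ->
  f h <= K * ((t - / t) * c + norm1 h / t).
Proof.
move=> K0 f_sub f_dom.
have sparse_case : forall (h : vec n) c, 0 <= c -> (forall i, Rabs (h i) <= c) ->
    (norm0 h <= B)%N -> f h <= K * ((t - / t) * c + norm1 h / t).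
  move=> y d d0 yd yB; apply: Rle_trans (f_dom y yB) _.
  exact/Rmult_le_compat_l/norm2_sparse_le.
have [N hN] : exists N, (norm0 h <= N)%N by exists (norm0 h).
elim: N h c hN => [|N IH] h c hN c0 hc; first by apply: sparse_case => //; lia.
have [hB|Bh] := leqP (norm0 h) B; first exact: sparse_case.
have [S [c' [cS [c'0 [outS inS]]]]] :=
  exists_top_coords h (leq_trans (ltnW Bh) (norm0_le_dim h)).
have r_sparse : (norm0 (restr (predC S) h) <= N)%N.
  by have := @norm0_restr_compl _ h S c'; rewrite cS => /(_ Bh outS inS); lia.
set w := restr S h; set r := restr (predC S) h.
have head : norm2 w + (t - / t) * c' <= (t - / t) * c + norm1 w / t.
  apply: norm2_head_le cS c'0 _ _ => [i /negbTE nSi|j Sj]; rewrite /w /restr ?nSi ?Sj //.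
  by have := inS j Sj; have := hc j; lra.
have r_le : f r <= K * ((t - / t) * c' + norm1 r / t).
  apply: IH => // i; rewrite /r /restr /=; case: ifP => [/outS //|_].
  by rewrite Rabs_R0.
have w_le : f w <= K * norm2 w by apply/f_dom; rewrite -cS; apply: norm0_restr_le.
have := f_sub w r; rewrite restr_vadd (norm1_restr S h) -/w -/r.
have := Rmult_le_compat_l K _ _ K0 head.
lra.
Qed.

(* The [(t - 1/t) c] term of [shelling_le] is paid for by the B - 1 kept entries,
   each of size at least c. *)
Lemma exists_tail (h : vec n) : exists S : pred 'I_n, (count S I <= B - 1)%N /\
  forall (f : vec n -> R) K, 0 <= K -> subadditive f -> sparse_dominated f K ->
    f (restr (predC S) h) <= K * (norm1 h / t).
Proof.
have [S [c [cS [c0 [outS big_head]]]]] := exists_tail_threshold h (B - 1).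
exists S; split => // f K K0 f_sub f_dom; have t1 := sqrt_INR_ge1.
apply: Rle_trans (shelling_le K0 f_sub f_dom c0 _) _.
  by move=> i; rewrite /restr /=; case: ifP => [/outS //|_]; rewrite Rabs_R0.
apply: Rmult_le_compat_l => //.
rewrite minus_INR in big_head; last by apply/leP; lia.
rewrite -{1}sqrt_INR_sqr /= in big_head.
rewrite (norm1_restr S h).
have -> : (t - / t) * c = (t ^ 2 - 1) * c / t by field; lra.
have tinv_pos : 0 < / t by apply: Rinv_0_lt_compat; lra.
rewrite /Rdiv; have := Rmult_le_compat_r _ _ _ (Rlt_le _ _ tinv_pos) big_head.
lra.
Qed.

End Shelling.

Lemma S_sparse_half n (w : vec n) M : (2 * norm0 w <= M)%N -> S_sparse (INR M / 2) (@vzero n) w.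
Proof.
by move=> /leP /le_INR; rewrite /S_sparse vsubv0 mult_INR /=; lra.
Qed.

Lemma sparse_vsub_decomposition n (v : vec n) p q : (norm0 v <= p + q)%N ->
  exists v1 v2 : vec n, (norm0 v1 <= p)%N /\ (norm0 v2 <= q)%N /\ v = vsub v1 v2.
Proof.
move=> le_pq.
have [P cP] : exists P : pred 'I_n, count (predI P (nonzero v)) (enum 'I_n) = minn p (norm0 v).
  by apply: exists_subpred_count; rewrite ?enum_uniq // -norm0E geq_minr.
exists (restr P v), (fun i => - restr (predC P) v i); do !split.
- by rewrite norm0_restr cP geq_minl.
- by rewrite norm0_opp; have := norm0_restr_split P v; rewrite norm0_restr cP; lia.
- apply: functional_extensionality => i; rewrite /vsub /restr /=.
  by case: (P i) => /=; ring.
Qed.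

Lemma SREC_lower_bound k n m (A : mat m n) (G : vec k -> vec n) M gamma delta z1 z2 (v : vec n) :
  SREC A (S_G' (INR M / 2) G) gamma delta -> (norm0 v < M)%N ->
  gamma * norm2 (vadd (vsub (G z1) (G z2)) v) - delta <=
  norm2 (mulmv A (vadd (vsub (G z1) (G z2)) v)).
Proof.
move=> hsrec vM.
have [v1 [v2 [v1s [v2s ->]]]] := @sparse_vsub_decomposition n v (M %/ 2) (M %/ 2) ltac:(lia).
have := hsrec (vadd (vsub (G z1) (G z2)) v1) (vadd (vsub (G z2) (G z2)) v2).
have -> : vsub (vadd (vsub (G z1) (G z2)) v1) (vadd (vsub (G z2) (G z2)) v2) =
          vadd (vsub (G z1) (G z2)) (vsub v1 v2).
  by apply: functional_extensionality => i; rewrite /vsub /vadd; ring.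
have mem : forall z (w : vec n), (norm0 w <= M %/ 2)%N -> S_G' (INR M / 2) G (vadd (vsub (G z) (G z2)) w).
  by move=> z w wM; exists z, z2, w; split => //; apply: S_sparse_half; lia.
by move=> /(_ (mem _ _ v1s) (mem _ _ v2s)); lra.
Qed.

Lemma norm2_le_dist_S_G' k n m p q (G : vec k -> vec n) (A : mat m n) alpha delta eps
    (eta xh : vec n) :
  (0 < q)%N -> 0 < alpha < 1 ->
  SREC A (S_G' (INR (p + q) / 2) G) (1 - alpha) delta -> RIP A (INR q) alpha ->
  T_A A eps eta -> S_G' (INR p) G xh ->
  norm2 eta <= / sqrt (INR q) * ((1 + alpha) / (1 - alpha) + 1) * norm1 (vsub eta xh)
               + / (1 - alpha) * eps + delta / (1 - alpha).
Proof.
move=> q_gt0 alpha01 hsrec hrip hT [z1 [z2 [nu [nu_sparse xhE]]]].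
set t := sqrt (INR q); set h := vsub eta xh.
have t1 : 1 <= t := sqrt_INR_ge1 q_gt0.
have [S [cS tail]] := exists_tail q_gt0 h.
set r := restr (predC S) h.
have Ar_le : norm2 (mulmv A r) <= (1 + alpha) * (norm1 h / t).
  apply: (tail (fun x => norm2 (mulmv A x))) => [|x y|w wq]; first lra.
  - by rewrite mulmv_vadd; apply: norm2_vadd.
  - by have := hrip w; rewrite /S_sparse vsubv0 => /(_ (le_INR _ _ (elimT leP wq))); lra.
have r_le : norm2 r <= 1 * (norm1 h / t).
  by apply: (tail (@norm2 n)) => [|x y|w _]; [lra|apply: norm2_vadd|lra].
set x := vsub eta r.
have eta_le : norm2 eta <= norm2 x + norm2 r.
  have {1}-> : eta = vadd x r.
    by apply: functional_extensionality => i; rewrite /vadd /x /vsub; ring.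
  exact: norm2_vadd.
have Ax_le : norm2 (mulmv A x) <= eps + (1 + alpha) * (norm1 h / t).
  by rewrite /x mulmv_vsub; apply: Rle_trans (norm2_vsub _ _) _; rewrite /T_A in hT; lra.
have x_lower : (1 - alpha) * norm2 x - delta <= norm2 (mulmv A x).
  have -> : x = vadd (vsub (G z1) (G z2)) (vadd nu (restr S h)).
    apply: functional_extensionality => i; rewrite /x /r /h xhE /vsub /vadd /restr /=.
    by case: (S i) => /=; ring.
  apply: SREC_lower_bound hsrec _; apply: leq_ltn_trans (norm0_vadd _ _) _.
  have := norm0_restr_le S h; move: nu_sparse; rewrite /S_sparse vsubv0 => /INR_le /leP.
  lia.
have -> : / t * ((1 + alpha) / (1 - alpha) + 1) * norm1 h + / (1 - alpha) * eps
          + delta / (1 - alpha) = (eps + (1 + alpha) * (norm1 h / t) + delta) / (1 - alpha)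
          + norm1 h / t by field; lra.
have : norm2 x <= (eps + (1 + alpha) * (norm1 h / t) + delta) / (1 - alpha).
  apply: (Rmult_le_reg_l (1 - alpha)); first lra.
  by rewrite Rmult_div_assoc Rmult_div_r; lra.
lra.
Qed.

Lemma sigma_G'_glb k n s (G : vec k -> vec n) (x : vec n) y :
  (forall xh, S_G' (INR s) G xh -> y <= norm1 (vsub x xh)) -> y <= sigma_G' s G x.
Proof.
move=> lb; rewrite /sigma_G'; case: completeness => L [_ L_least] /=.
suff : L <= - y by lra.
by apply: L_least => _ [xh [xh_in ->]]; have := lb xh xh_in; lra.
Qed.

Theorem lemma4 (k n m a b l : nat) (alpha delta eps : R) (G : vec k -> vec n)
  (A : mat m n)
  (ha : (0 < a)%nat) (hb : (0 < b)%nat) (hl : (0 < l)%nat)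
  (halpha : 0 < alpha < 1) (hdelta : 0 <= delta) (heps : 0 <= eps)
  (hsrec : SREC A (S_G' (INR ((a + b) * l)%nat / 2) G) (1 - alpha) delta)
  (hrip : RIP A (INR (b * l)%nat) alpha) :
  forall eta : vec n, T_A A eps eta ->
    norm2 eta <=
      / sqrt (INR (b * l)%nat) * ((1 + alpha) / (1 - alpha) + 1)
        * sigma_G' (a * l)%nat G eta
      + / (1 - alpha) * eps + delta / (1 - alpha).
Proof.
move=> eta hT.
have bl_gt0 : (0 < b * l)%N by rewrite muln_gt0 hb.
rewrite mulnDl in hsrec.
set c0 := _ * (_ + 1); pose C := / (1 - alpha) * eps + delta / (1 - alpha).
have c0_pos : 0 < c0.
  apply: Rmult_lt_0_compat; first by apply/Rinv_0_lt_compat/sqrt_lt_R0/(lt_INR 0)/ltP.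
  have : 0 < (1 + alpha) / (1 - alpha) by apply: Rdiv_lt_0_compat; lra.
  lra.
have : (norm2 eta - C) / c0 <= sigma_G' (a * l) G eta.
  apply: sigma_G'_glb => xh xh_in; apply: (Rmult_le_reg_l c0) => //.
  rewrite Rmult_div_assoc Rmult_div_r; last lra.
  have := norm2_le_dist_S_G' bl_gt0 halpha hsrec hrip hT xh_in; rewrite -/c0 /C; lra.
move/(Rmult_le_compat_l c0) => /(_ (Rlt_le _ _ c0_pos)).
by rewrite Rmult_div_assoc Rmult_div_r /C; lra.
Qed.
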